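(* For every positive integer $D$ there is a deterministic algorithm (which may use $D$) such that, in every run whose sequence of communication graphs satisfies Assumption 1 with parameter $D$, the algorithm solves consensus, and every process has decided by round $r_{ST}+4D+1$, where $r_{ST}$ is the first round for which an interval $J=[r_{ST},r_{ST}+d]$ as in Assumption 1 exists.
   Context: Model: a finite set $\Pi$ of $n\ge2$ processes runs a deterministic algorithm in synchronous lock-step rounds $r=1,2,\dots$. An adversary fixes an infinite sequence of simple directed graphs $\mathcal{G}^1,\mathcal{G}^2,\dots$ on vertex set $\Pi$; $(p\to q)\in\mathcal{G}^r$ iff $q$ receives $p$'s round-$r$ message in round $r$. In round $r$ each process $p$ broadcasts a message determined by its current state (received exactly by its out-neighbours in $\mathcal{G}^r$), then computes its new state from its current state and the set of (sender, message) pairs it received in round $r$. Consensus: each process $p$ starts with an input value $v_p$ from an ordered set $V$ and may irrevocably decide a value; Agreement: any two decided values are equal; Validity: every decided value is the input value of some process; Termination: every process eventually decides. Causality: $p$ causally influences $q$ in round $t$ if $q=p$ or $(p\to q)\in\mathcal{G}^t$; a causal chain of length $k\ge1$ from $p$ in round $t$ to $q$ is a sequence $p=p_0,\dots,p_k=q$ with $p_i$ causally influencing $p_{i+1}$ in round $t+i$; the causal distance $d_t(p,q)$ is the least such $k$ ($\infty$ if none). A root component of $\mathcal{G}^t$ is a strongly connected component $\mathcal{R}$ with no edge $(q\to p)$, $p\in\mathcal{R}$, $q\notin\mathcal{R}$. For an interval $I=[r,s]$, an $I$-vertex-stable root component is a set $\mathcal{R}\subseteq\Pi$ that, in every round $t\in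 I$, is (the vertex set of) a root component of $\mathcal{G}^t$. When each $\mathcal{G}^x$ has a unique root component $\mathcal{R}^x$, the round-$x$ network causal diameter is $D^x=\max\{d_x(p,q):p\in\mathcal{R}^x,q\in\Pi\}$, and for $I=[r,s]$, $D^I=\max\{D^x: x\in I,\ x+D^x-1\le s\}$ ($\infty$ if this set is empty). An $I$-vertex-stable root component with $I=[r,s]$ is $D$-bounded if $D\ge D^I$ and $D^{s-D+1}\le D$. Assumption 1 (parameter $D$): for every round $r$ there is exactly one root component $\mathcal{R}^r$ in $\mathcal{G}^r$; every $I$-vertex-stable root component with $|I|\ge D$ (where $|[r,s]|=s-r+1$) is $D$-bounded; and there exists an interval $J=[r_{ST},r_{ST}+d]$ with $d>4D$ such that there is a $D$-bounded $J$-vertex-stable root component. *)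

From mathcomp Require Import all_boot all_order.
Set Implicit Arguments.
Unset Strict Implicit.
Unset Printing Implicit Defensive.

(* Processes are 'I_n; a communication graph is a relation on 'I_n;
   G r p q  means  (p -> q) is an edge of the round-r graph (rounds r >= 1;
   G 0 is irrelevant). *)
Definition graph_seq (n : nat) := nat -> rel 'I_n.

Definition simple_graphs n (G : graph_seq n) := forall r, irreflexive (G r).

Record Algorithm (n : nat) (V : Type) := {
  St : Type;
  Msg : Type;
  init : 'I_n -> V -> St;
  send : 'I_n -> St -> Msg;
  trans : 'I_n -> St -> ('I_n -> option Msg) -> St; (* received: sender |-> message, if any *)
  decision : 'I_n -> St -> option V
}.
Arguments init {n V} a _ _.
Arguments send {n V} a _ _.
Arguments trans {n V} a _ _ _.
Arguments decision {n V} a _ _.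

Fixpoint state n V (A : Algorithm n V) (G : graph_seq n) (inp : 'I_n -> V)
    (r : nat) : 'I_n -> St A :=
  match r with
  | 0 => fun p => init A p (inp p)
  | r'.+1 => fun p =>
      trans A p (state A G inp r' p)
        (fun q => if G r'.+1 q p then Some (send A q (state A G inp r' q)) else None)
  end.

Definition decided n V (A : Algorithm n V) G inp (p : 'I_n) (r : nat) (v : V) :=
  decision A p (state A G inp r p) = Some v.

Definition solves_consensus n V (A : Algorithm n V) G (inp : 'I_n -> V) :=
  [/\
      (forall p r r' v, r <= r' -> decided A G inp p r v -> decided A G inp p r' v),
      (forall p q r r' v w, decided A G inp p r v -> decided A G inp q r' w -> v = w),
      (forall p r v, decided A G inp p r v -> exists q, v = inp q) &
      (forall p, exists r v, decided A G inp p r v)].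

Definition causes n (G : graph_seq n) (t : nat) (p q : 'I_n) : bool :=
  (p == q) || G t p q.

Fixpoint chain n (G : graph_seq n) (t k : nat) (p q : 'I_n) : Prop :=
  match k with
  | 0 => p = q
  | k'.+1 => exists m, causes G t p m /\ chain G t.+1 k' m q
  end.

(* d_t(p,q) <= k   (d_t(p,q) = least k >= 1 with a causal chain; infinite if none) *)
Definition dist_le n (G : graph_seq n) (t : nat) (p q : 'I_n) (k : nat) : Prop :=
  exists j, 0 < j <= k /\ chain G t j p q.

Definition is_SCC n (e : rel 'I_n) (R : {set 'I_n}) : Prop :=
  exists x, R = [set y | connect e x y && connect e y x].

Definition is_root_comp n (e : rel 'I_n) (R : {set 'I_n}) : Prop :=
  is_SCC e R /\ (forall p q, p \in R -> q \notin R -> ~~ e q p).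

(* D^x <= k : the round-x network causal diameter (max of d_x(p,q) over
   p in the (unique) root component R^x of G^x and q in Pi) is at most k *)
Definition diam_le n (G : graph_seq n) (x k : nat) : Prop :=
  forall R, is_root_comp (G x) R -> forall p q, p \in R -> dist_le G x p q k.

Definition vstable n (G : graph_seq n) (r s : nat) (R : {set 'I_n}) : Prop :=
  forall t, r <= t <= s -> is_root_comp (G t) R.

(* R, an [r,s]-vertex-stable root component, is D-bounded:
   D >= D^I  and  D^(s-D+1) <= D, where
   D^I = max { D^x : x in I, x + D^x - 1 <= s } (infinite if the set is empty).
   "x + D^x - 1 <= s" for x in I is written  D^x <= s + 1 - x. *)
Definition D_bounded n (G : graph_seq n) (r s : nat) (R : {set 'I_n}) (D : nat) : Prop :=
  [/\ vstable G r s R,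
      (exists x, r <= x <= s /\ diam_le G x (s + 1 - x)),
      (forall x, r <= x <= s -> diam_le G x (s + 1 - x) -> diam_le G x D) &
      diam_le G (s + 1 - D) D].

Definition good_start n (G : graph_seq n) (D r : nat) : Prop :=
  0 < r /\ exists d, 4 * D < d /\ exists R, vstable G r (r + d) R /\ D_bounded G r (r + d) R D.

Definition Assumption1 n (G : graph_seq n) (D : nat) : Prop :=
  [/\ (forall r, 0 < r -> exists! R, is_root_comp (G r) R),
      (forall r s R, 0 < r -> r <= s -> D <= s - r + 1 -> vstable G r s R ->
         D_bounded G r s R D) &
      (exists r, good_start G D r)].

(* Processes flood everything they learn about the communication graphs, so
   D rounds after a round t in which a D-bounded root component R is stable,
   every process knows the in-neighbourhoods of R in round t and can certify
   that R was the root component of round t.  A process that belongs to a root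
   component certified D rounds ago locks: its proposal becomes (current
   round, largest value heard), proposals being compared lexicographically.
   In a window of 3D + 1 rounds with stable root component R, from its
   (D+1)-st round on every member of R locks in every round, so values inside
   R only come from R and increase along causal chains; D rounds later all of
   R holds one value M, and after D more rounds every proposal has been locked
   inside R during the window and carries M.  Deciding once such a window has
   been certified therefore gives agreement, and the window J of Assumption 1
   is certified by everyone by round r_ST + 4D + 1. *)

From mathcomp Require Import all_boot all_order zify.
Import Order.TTheory.

Set Implicit Arguments.
Unset Strict Implicit.
Unset Printing Implicit Defensive.

Section RootComponents.
Variable n : nat.
Implicit Types (e : rel 'I_n) (R : {set 'I_n}).

Lemma root_comp_nonempty e R : is_root_comp e R -> exists x, x \in R.
Proof. by case=> [[x ->]] _; exists x; rewrite inE !connect0. Qed.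

Section InEdges.
Variables (e e' : rel 'I_n) (R : {set 'I_n}).
Hypothesis eq_in : forall s q, q \in R -> e s q = e' s q.
Hypothesis closed_in : forall p q, p \in R -> q \notin R -> ~~ e q p.

Lemma path_to_root_comp u s :
  path e u s -> last u s \in R -> u \in R /\ path e' u s.
Proof.
elim: s u => [|w s IHs] u //= /andP[euw ews] /(IHs _ ews) [wR ews'].
have uR : u \in R by apply: contraLR euw; apply: closed_in.
by rewrite uR -eq_in // euw.
Qed.

Lemma connect_to_root_comp u v :
  v \in R -> connect e u v -> u \in R /\ connect e' u v.
Proof.
move=> vR /connectP[s es evs]; rewrite evs in vR.
by case: (path_to_root_comp es vR) => uR es'; split => //; apply/connectP; exists s.
Qed.

End InEdges.

Lemma root_comp_eq_in e e' R :
  (forall s q, q \in R -> e s q = e' s q) -> is_root_comp e R -> is_root_comp e' R.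
Proof.
move=> eq_in [[x defR] closed_in].
have xR : x \in R by rewrite defR inE !connect0.
have eq_in' s q : q \in R -> e' s q = e s q by move/eq_in->.
have closed_in' p q : p \in R -> q \notin R -> ~~ e' q p.
  by move=> pR qR; rewrite -eq_in // closed_in.
split=> //; exists x; apply/setP => y; rewrite defR !inE.
apply/andP/andP => [] [xy yx].
- have [yR yx'] := connect_to_root_comp eq_in closed_in xR yx.
  by have [_ xy'] := connect_to_root_comp eq_in closed_in yR xy.
- have [yR yx'] := connect_to_root_comp eq_in' closed_in' xR yx.
  by have [_ xy'] := connect_to_root_comp eq_in' closed_in' yR xy.
Qed.

Definition root_compb e R :=
  [exists x, R == [set y | connect e x y && connect e y x]] &&
  [forall p in R, forall q, (q \notin R) ==> ~~ e q p].

Lemma root_compP e R : reflect (is_root_comp e R) (root_compb e R).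
Proof.
apply: (iffP andP) => [[/existsP[x /eqP defR] /forall_inP closed_in]|].
  by split; [exists x | move=> p q pR qR; exact: implyP (forallP (closed_in p pR) q) qR].
case=> [[x defR] closed_in].
split; first by apply/existsP; exists x; rewrite defR.
by apply/forall_inP => p pR; apply/forallP => q; apply/implyP; apply: closed_in.
Qed.

End RootComponents.

Section Causality.
Variables (n : nat) (G : graph_seq n).

Lemma causes_refl t p : causes G t p p.
Proof. by rewrite /causes eqxx. Qed.

Lemma chainSr t k p q :
  chain G t k.+1 p q <-> exists m, chain G t k p m /\ causes G (t + k) m q.
Proof.
elim: k t p => [|k IHk] t p /=.
  split=> [[m [pm mq]]|[m [pm mq]]]; subst m.
  - by exists p; rewrite addn0.
  - by exists q; rewrite addn0 in mq.
split=> [[m [pm /IHk[m' [mm' m'q]]]]|[m' [[m [pm mm']] m'q]]].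
  by exists m'; split; [exists m | rewrite addSnnS in m'q].
by exists m; split=> //; apply/IHk; exists m'; rewrite addSnnS.
Qed.

Lemma chain_widen t k j p q : k <= j -> chain G t k p q -> chain G t j p q.
Proof.
move=> /subnKC <-; elim: (j - k) => [|i IHi pq]; first by rewrite addn0.
by rewrite addnS; apply/chainSr; exists q; split; [exact: IHi | exact: causes_refl].
Qed.

Lemma vstable_sub r s r' s' R :
  vstable G r s R -> r <= r' -> s' <= s -> vstable G r' s' R.
Proof. by move=> stR rr' s's t /andP[r't ts']; apply: stR; lia. Qed.

End Causality.

Lemma lexi_fst_le d (T : orderType d) (a b : nat * T) :
  (a <= b :> (nat *l T))%O -> a.1 <= b.1.
Proof. by rewrite leEprodlexi => /andP[]. Qed.

Lemma lexi_snd_le d d' (T : orderType d) (T' : orderType d') (a b : T * T') :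
  (a <= b :> (T *l T'))%O -> a.1 = b.1 -> (a.2 <= b.2)%O.
Proof. by rewrite leEprodlexi => /andP[_ /implyP le2] eq1; rewrite le2 // eq1. Qed.

Lemma lexi_fst_lt d (T : orderType d) (a b : nat * T) :
  a.1 < b.1 -> (a <= b :> (nat *l T))%O.
Proof. by move=> lt1; rewrite leEprodlexi !leEnat (ltnW lt1) leqNgt lt1. Qed.

Section Algorithm.
Variables (D n : nat) (disp : Order.disp_t) (V : orderType disp).

(* [proposal] is the pair (round of the last lock, value), compared
   lexicographically; [view t q = Some N] records that the in-neighbourhood of
   [q] in round [t] is [N]. *)
Record pstate := PState {
  round : nat;
  proposal : nat * V;
  verdict : option V;
  view : nat -> 'I_n -> option {set 'I_n} }.

Implicit Types (x : pstate) (rcv : 'I_n -> option pstate)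
  (w : nat -> 'I_n -> option {set 'I_n}).

Definition max_proposal (own : nat * V) rcv : nat * V :=
  \big[Order.max/(own : nat *l V)]_s (oapp proposal own (rcv s) : nat *l V).

Definition heard rcv t q s := obind (fun m => view m t q) (rcv s).

Definition relay rcv t q :=
  if [pick s | heard rcv t q s] is Some s then heard rcv t q s else None.

Definition next_view p r x rcv t q :=
  if (t == r) && (q == p) then Some [set s | rcv s]
  else if view x t q is Some N then Some N else relay rcv t q.

Definition known_graph w t : rel 'I_n :=
  fun s q => if w t q is Some N then s \in N else false.

Definition certified w (R : {set 'I_n}) t :=
  [forall q in R, w t q] && root_compb (known_graph w t) R.

Definition locks p r w :=
  [exists R : {set 'I_n}, (p \in R) && certified w R (r - D)].

Definition window_certified r w :=
  has (fun a => [exists R : {set 'I_n},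
                   all (certified w R) (index_iota a (a + 3 * D).+1)])
      (index_iota 1 (r - 3 * D).+1).

Definition step p x rcv : pstate :=
  let r := (round x).+1 in
  let w := next_view p r x rcv in
  let m := max_proposal (proposal x) rcv in
  let pr : nat * V := if locks p r w then (r, m.2) else m in
  let d := if verdict x is Some v then Some v
           else if window_certified r w then Some pr.2 else None in
  PState r pr d w.

Definition consensus_alg : Algorithm n V := {|
  St := pstate; Msg := pstate;
  init p v := PState 0 (0, v) None (fun _ _ => None);
  send _ x := x;
  trans := step;
  decision _ := verdict |}.

Lemma max_proposal_ge_own own rcv : (own <= max_proposal own rcv :> (nat *l V))%O.
Proof. exact: bigmax_ge_id. Qed.

Lemma max_proposal_ge_rcv own rcv s m :
  rcv s = Some m -> (proposal m <= max_proposal own rcv :> (nat *l V))%O.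
Proof. by move=> rcv_s; apply: (bigmax_sup s) => //; rewrite rcv_s. Qed.

Lemma max_proposal_cases own rcv : max_proposal own rcv = own \/
  exists s m, rcv s = Some m /\ max_proposal own rcv = proposal m.
Proof.
apply: (big_ind (fun y => y = own \/ exists s m, rcv s = Some m /\ y = proposal m)).
- by left.
- by move=> y z Py Pz; rewrite maxEle; case: ifP.
- by move=> s _; case E: (rcv s) => [m|] /=; [right; exists s, m | left].
Qed.

Lemma relay_some rcv t q N :
  relay rcv t q = Some N -> exists s m, rcv s = Some m /\ view m t q = Some N.
Proof.
rewrite /relay /heard; case: pickP => // s _.
by case E: (rcv s) => [m|] //= vm; exists s, m.
Qed.

Lemma relay_heard rcv t q s m : rcv s = Some m -> view m t q -> relay rcv t q.
Proof.
move=> rcv_s vm; rewrite /relay; case: pickP => [s' // | /(_ s)].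
by rewrite /heard rcv_s /=; case: (view m t q) vm.
Qed.

End Algorithm.

Section Run.
Variables (D n : nat) (disp : Order.disp_t) (V : orderType disp).
Variables (G : graph_seq n) (inp : 'I_n -> V).

Local Notation st r p := (state (consensus_alg D n V) G inp r p).
Definition received r p q := if G r.+1 q p then Some (st r q) else None.
Local Notation value r p := (proposal (st r p)).2.

Lemma state_succ r p : st r.+1 p = step D p (st r p) (received r p).
Proof. by []. Qed.

Lemma round_state r p : round (st r p) = r.
Proof. by elim: r p => [|r IHr] p //=; rewrite IHr. Qed.

Lemma view_succ r p : view (st r.+1 p) = next_view p r.+1 (st r p) (received r p).
Proof. by rewrite state_succ /= round_state. Qed.

Lemma view_sound r p t q N :
  view (st r p) t q = Some N -> 0 < t <= r /\ N = [set s | G t s q].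
Proof.
elim: r p t q N => [//|r IHr] p t q N; rewrite view_succ /next_view.
case: ifP => [/andP[/eqP-> /eqP->] [<-]|_].
  rewrite leqnn; split=> //; apply/setP => s.
  by rewrite !inE /received; case: (G r.+1 s p).
case E: (view (st r p) t q) => [N'|].
  by case=> <-; have [/andP[t0 tr] ->] := IHr _ _ _ _ E; rewrite t0 (leqW tr).
case/relay_some => s [m [rcv_s vm]].
move: rcv_s; rewrite /received; case: (G r.+1 s p) => // [[m_eq]]; rewrite -m_eq in vm.
by have [/andP[t0 tr] ->] := IHr _ _ _ _ vm; rewrite t0 (leqW tr).
Qed.

Lemma view_keep r p t q : view (st r p) t q -> view (st r.+1 p) t q.
Proof. by rewrite view_succ /next_view; case: ifP => // _; case: (view _ t q). Qed.

Lemma view_relay r p s t q : G r.+1 s p -> view (st r s) t q -> view (st r.+1 p) t q.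
Proof.
move=> Gsp vs; rewrite view_succ /next_view; case: ifP => // _.
case: (view (st r p) t q) => //.
by apply: (relay_heard (s := s) (m := st r s)) vs; rewrite /received Gsp.
Qed.

Lemma view_chain t k q p : 0 < t -> chain G t.+1 k q p -> view (st (t + k) p) t q.
Proof.
move=> t0; elim: k p => [|k IHk] p.
  by move=> /= ->; rewrite addn0 -(prednK t0) view_succ /next_view prednK // !eqxx.
case/chainSr => m [qm /orP[/eqP <-|Gmp]]; rewrite addnS.
  exact/view_keep/IHk.
by apply: view_relay (IHk _ qm); rewrite -addSn.
Qed.

Lemma known_graph_state r p t s q :
  view (st r p) t q -> known_graph (view (st r p)) t s q = G t s q.
Proof.
rewrite /known_graph; case E: (view _ t q) => [N|] // _.
by have [_ ->] := view_sound E; rewrite inE.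
Qed.

Lemma certified_sound r p R t :
  certified (view (st r p)) R t -> 0 < t <= r /\ is_root_comp (G t) R.
Proof.
case/andP=> /forall_inP seen /root_compP rootR.
have [x xR] := root_comp_nonempty rootR.
split; first by case E: (view _ t x) (seen x xR) => [N|] // _; case: (view_sound E).
by apply: root_comp_eq_in rootR => s q /seen; apply: known_graph_state.
Qed.

Lemma certified_complete r p R t : is_root_comp (G t) R ->
  (forall q, q \in R -> view (st r p) t q) -> certified (view (st r p)) R t.
Proof.
move=> rootR seen; apply/andP; split; first exact/forall_inP.
apply/root_compP; apply: root_comp_eq_in rootR => s q /seen.
by move/known_graph_state ->.
Qed.

Definition merged r p := max_proposal (proposal (st r p)) (received r p).

Lemma proposal_succ r p : proposal (st r.+1 p) =
  if locks D p r.+1 (view (st r.+1 p)) then (r.+1, (merged r p).2) else merged r p.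
Proof. by rewrite view_succ state_succ /= round_state. Qed.

Lemma merged_cases r p : merged r p = proposal (st r p) \/
  exists s, G r.+1 s p /\ merged r p = proposal (st r s).
Proof.
case: (max_proposal_cases (proposal (st r p)) (received r p)) => [|[s [m [rcv_s]]]];
  rewrite -/(merged r p) => ->; first by left.
by right; exists s; move: rcv_s; rewrite /received; case: (G r.+1 s p) => // [[<-]].
Qed.

Lemma merged_ge_rcv r p s :
  G r.+1 s p -> (proposal (st r s) <= merged r p :> (nat *l V))%O.
Proof.
by move=> Gsp; apply: (@max_proposal_ge_rcv _ _ _ _ _ s (st r s)); rewrite /received Gsp.
Qed.

Lemma merged_ge_own r p : (proposal (st r p) <= merged r p :> (nat *l V))%O.
Proof. exact: max_proposal_ge_own. Qed.

Lemma lock_round_le r p : (proposal (st r p)).1 <= r.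
Proof.
elim: r p => [//|r IHr] p; rewrite proposal_succ; case: ifP => // _.
by case: (merged_cases r p) => [->|[s [_ ->]]]; apply: leqW.
Qed.

Lemma merged_le_succ r p : (merged r p <= proposal (st r.+1 p) :> (nat *l V))%O.
Proof.
rewrite proposal_succ; case: ifP => _ //; apply: lexi_fst_lt; rewrite /= ltnS.
by case: (merged_cases r p) => [->|[s [_ ->]]]; apply: lock_round_le.
Qed.

Lemma proposal_chain t k q p :
  chain G t.+1 k q p -> (proposal (st t q) <= proposal (st (t + k) p) :> (nat *l V))%O.
Proof.
elim: k p => [|k IHk] p; first by move=> /= ->; rewrite addn0.
case/chainSr => m [qm mp]; apply: le_trans (IHk _ qm) _; rewrite addnS.
apply: le_trans (merged_le_succ _ _); case/orP: mp => [/eqP <-|Gmp].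
  exact: merged_ge_own.
by apply: merged_ge_rcv; rewrite -addSn.
Qed.

Lemma value_succ r p : value r.+1 p = (merged r p).2.
Proof. by rewrite proposal_succ; case: ifP. Qed.

Lemma value_succ_cases r p :
  value r.+1 p = value r p \/ exists s, G r.+1 s p /\ value r.+1 p = value r s.
Proof.
rewrite value_succ.
by case: (merged_cases r p) => [->|[s [Gsp ->]]]; [left | right; exists s].
Qed.

Lemma value_is_input r p : exists q, value r p = inp q.
Proof.
elim: r p => [|r IHr] p; first by exists p.
by case: (value_succ_cases r p) => [->|[s [_ ->]]].
Qed.

Lemma uniform_value_persists T T' v :
  T <= T' -> (forall p, value T p = v) -> forall p, value T' p = v.
Proof.
move=> /subnKC <-; elim: (T' - T) => [|i IHi] unif p; first by rewrite addn0.
by rewrite addnS; case: (value_succ_cases (T + i) p) => [->|[s [_ ->]]]; apply: IHi.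
Qed.

Lemma lock_witness r p : 0 < (proposal (st r p)).1 ->
  exists q, proposal (st (proposal (st r p)).1 q) = proposal (st r p) /\
            locks D q (proposal (st r p)).1 (view (st (proposal (st r p)).1 q)).
Proof.
elim: r p => [//|r IHr] p.
case L: (locks D p r.+1 (view (st r.+1 p))); rewrite proposal_succ L.
  by exists p; rewrite proposal_succ L.
by case: (merged_cases r p) => [->|[s [_ ->]]]; apply: IHr.
Qed.

Lemma verdict_succ r p : verdict (st r.+1 p) =
  if verdict (st r p) is Some v then Some v
  else if window_certified D r.+1 (view (st r.+1 p)) then Some (value r.+1 p) else None.
Proof. by rewrite proposal_succ view_succ state_succ /= round_state. Qed.

Lemma verdict_persists r r' p v :
  r <= r' -> verdict (st r p) = Some v -> verdict (st r' p) = Some v.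
Proof.
move=> /subnKC <-; elim: (r' - r) => [|i IHi] dec_v; first by rewrite addn0.
by rewrite addnS verdict_succ IHi.
Qed.

Lemma verdict_origin r p v : verdict (st r p) = Some v ->
  exists r0, window_certified D r0 (view (st r0 p)) /\ v = value r0 p.
Proof.
elim: r => [//|r IHr]; rewrite verdict_succ.
case: (verdict (st r p)) IHr => [w IHr /IHr //|_].
by case: ifP => // win [<-]; exists r.+1.
Qed.

Lemma window_decides r p :
  window_certified D r.+1 (view (st r.+1 p)) -> verdict (st r.+1 p).
Proof. by move=> win; rewrite verdict_succ win; case: (verdict (st r p)). Qed.

Lemma window_certified_sound r p : window_certified D r (view (st r p)) ->
  exists a R, [/\ 0 < a, a + 3 * D <= r & vstable G a (a + 3 * D) R].
Proof.
case/hasP=> a; rewrite mem_index_iota => /andP[a_gt0 a_le] /existsP[R /allP cert].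
exists a, R; split=> //; first by lia.
by move=> t t_in; apply: (certified_sound (cert t _)).2; rewrite mem_index_iota ltnS.
Qed.

End Run.

Section Consensus.
Variables (D n : nat) (disp : Order.disp_t) (V : orderType disp).
Variables (G : graph_seq n) (inp : 'I_n -> V).
Hypothesis D_gt0 : 0 < D.
Hypothesis root_unique : forall r, 0 < r -> exists! R, is_root_comp (G r) R.
Hypothesis stable_bounded : forall r s R, 0 < r -> r <= s -> D <= s - r + 1 ->
  vstable G r s R -> D_bounded G r s R D.

Local Notation st r p := (state (consensus_alg D n V) G inp r p).
Local Notation value r p := (proposal (st r p)).2.

Lemma root_comp_eq t R R' :
  0 < t -> is_root_comp (G t) R -> is_root_comp (G t) R' -> R = R'.
Proof. by move=> /root_unique[R0 [_ uniq]] /uniq <- /uniq <-. Qed.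

(* The last clause of D-boundedness for the interval [t, t + D - 1] is D^t <= D. *)
Lemma stable_root_reaches t R q p :
  0 < t -> vstable G t (t + D).-1 R -> q \in R -> chain G t D q p.
Proof.
move=> t_gt0 stR qR.
have t_le : t <= (t + D).-1 by lia.
have D_le : D <= (t + D).-1 - t + 1 by lia.
have [_ _ _] := stable_bounded t_gt0 t_le D_le stR.
have -> : (t + D).-1 + 1 - D = t by lia.
move=> /(_ R) diam; have [|k [/andP[_ k_le] qp]] := diam _ q p qR.
  by apply: stR; lia.
exact: chain_widen k_le qp.
Qed.

Lemma certified_stable t R r p :
  0 < t -> vstable G t (t + D) R -> t + D <= r -> certified (view (st r p)) R t.
Proof.
move=> t_gt0 stR tD_le; apply: certified_complete => [|q qR]; first by apply: stR; lia.
have qp : chain G t.+1 (r - t) q p.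
  apply: chain_widen (_ : D <= r - t) _; first by lia.
  by apply: (@stable_root_reaches _ R) => //; apply: vstable_sub stR _ _; lia.
by have := view_chain D inp t_gt0 qp; rewrite subnKC //; lia.
Qed.

Lemma window_certified_complete a R :
  0 < a -> vstable G a (a + 4 * D) R ->
  forall p, window_certified D (a + 4 * D).+1 (view (st (a + 4 * D).+1 p)).
Proof.
move=> a_gt0 stR p; apply/hasP; exists a; first by rewrite mem_index_iota; lia.
apply/existsP; exists R; apply/allP => t; rewrite mem_index_iota => t_in.
by apply: certified_stable; [lia | apply: vstable_sub stR _ _ | ]; lia.
Qed.

Section Window.
Variables (a : nat) (R : {set 'I_n}).
Hypothesis a_gt0 : 0 < a.
Hypothesis stR : vstable G a (a + 3 * D) R.

Lemma causes_in_window t s q :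
  a <= t <= a + 3 * D -> q \in R -> causes G t s q -> s \in R.
Proof.
move=> t_in qR /orP[/eqP-> // | Gsq]; have [_ closed] := stR t_in.
by apply: contraLR Gsq; apply: closed.
Qed.

Lemma lock_round_in_window l q :
  a + D <= l <= a + 3 * D -> q \in R -> (proposal (st l q)).1 = l.
Proof.
case: l => [|l] l_in qR; first by lia.
rewrite proposal_succ; case: ifP => // /negbT/existsPn/(_ R); rewrite qR andTb.
by move/negP; case; apply: certified_stable; [lia | apply: vstable_sub stR _ _ | ]; lia.
Qed.

Lemma locker_in_window l q :
  a + D <= l <= a + 3 * D -> locks D q l (view (st l q)) -> q \in R.
Proof.
move=> l_in /existsP[R' /andP[qR' /certified_sound[lD_gt0 rootR']]].
by rewrite (root_comp_eq _ (stR _) rootR') //; lia.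
Qed.

Lemma value_step_in_window r s q : a + D <= r < a + 3 * D -> q \in R ->
  causes G r.+1 s q -> (value r s <= value r.+1 q)%O.
Proof.
move=> r_in qR sq.
have sR : s \in R by apply: causes_in_window sq; lia.
have lock_r u : u \in R -> (proposal (st r u)).1 = r.
  by move=> uR; apply: lock_round_in_window; lia.
rewrite value_succ; apply: lexi_snd_le.
  by case/orP: sq => [/eqP-> | Gsq]; [apply: merged_ge_own | apply: merged_ge_rcv].
rewrite lock_r //; case: (merged_cases D G inp r q) => [->|[u [Guq ->]]].
  by rewrite lock_r.
rewrite lock_r //; apply: causes_in_window (_ : causes G r.+1 u q) => //.
  by lia.
by apply/orP; right.
Qed.

Lemma value_chain_in_window k q q' : a + D + k <= a + 3 * D -> q \in R ->
  chain G (a + D).+1 k q' q -> (value (a + D) q' <= value (a + D + k) q)%O.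
Proof.
elim: k q => [|k IHk] q k_le qR; first by move=> /= ->; rewrite addn0.
case/chainSr => m [q'm mq].
have mR : m \in R by apply: causes_in_window mq; lia.
apply: le_trans (IHk _ _ mR q'm) _; first by lia.
by rewrite addnS; apply: value_step_in_window; rewrite -?addSnnS -?addSn //; lia.
Qed.

Lemma value_from_window k q : a + D + k <= a + 3 * D -> q \in R ->
  exists2 q', q' \in R & value (a + D + k) q = value (a + D) q'.
Proof.
elim: k q => [|k IHk] q k_le qR; first by exists q; rewrite ?addn0.
rewrite addnS; case: (value_succ_cases D G inp (a + D + k) q) => [->|[s [Gsq ->]]].
  by apply: IHk; lia.
apply: IHk; first by lia.
by apply: causes_in_window (_ : causes G (a + D + k).+1 s q); [lia | | apply/orP; right].
Qed.

Lemma value_window_ge r q q' : a + 2 * D <= r <= a + 3 * D ->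
  q \in R -> q' \in R -> (value (a + D) q' <= value r q)%O.
Proof.
move=> r_in qR q'R; have -> : r = a + D + (r - (a + D)) by lia.
apply: value_chain_in_window => //; first by lia.
apply: chain_widen (_ : D <= r - (a + D)) _; first by lia.
by apply: (@stable_root_reaches _ R) => //; apply: vstable_sub stR _ _; lia.
Qed.

Lemma value_settles : exists M, forall r q,
  a + 2 * D <= r <= a + 3 * D -> q \in R -> value r q = M.
Proof.
have [q0 q0R] : exists q0, q0 \in R by apply/root_comp_nonempty/(stR (t := a)); lia.
exists (value (a + 2 * D) q0) => r q r_in qR; apply/le_anti/andP; split.
  have [|q' q'R] := value_from_window (k := r - (a + D)) _ qR; first by lia.
  by rewrite subnKC; [move->; apply: value_window_ge => //; lia | lia].
have [|q' q'R] := value_from_window (k := D) _ q0R; first by lia.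
by rewrite -addnA addnn -mul2n => ->; apply: value_window_ge.
Qed.

Lemma window_uniform_value : exists M, forall p, value (a + 3 * D) p = M.
Proof.
have [M settled] := value_settles.
have [q0 q0R] : exists q0, q0 \in R by apply/root_comp_nonempty/(stR (t := a)); lia.
exists M => p; have -> : a + 3 * D = a + 2 * D + D by lia.
have q0p : chain G (a + 2 * D).+1 D q0 p.
  by apply: (@stable_root_reaches _ R) => //; apply: vstable_sub stR _ _; lia.
have lock_ge : a + 2 * D <= (proposal (st (a + 2 * D + D) p)).1.
  have := lexi_fst_le (proposal_chain D inp q0p).
  by rewrite (@lock_round_in_window (a + 2 * D) q0) //; lia.
have lock_le := lock_round_le D G inp (a + 2 * D + D) p.
have [|q [eq_prop locks_q]] := @lock_witness D _ _ _ G inp (a + 2 * D + D) p.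
  by lia.
by rewrite -eq_prop; apply: settled; [lia | apply: locker_in_window locks_q; lia].
Qed.

End Window.

Lemma verdict_uniform r p v :
  verdict (st r p) = Some v -> exists T, forall q, value T q = v.
Proof.
case/verdict_origin => r0 [/window_certified_sound[a [R [a_gt0 a_le stR]]] ->].
have [M unif] := window_uniform_value a_gt0 stR.
by exists r0 => q; rewrite !(uniform_value_persists a_le unif).
Qed.

Lemma verdict_by_good_start rST p :
  good_start G D rST -> exists v, verdict (st (rST + 4 * D + 1) p) = Some v.
Proof.
case=> rST_gt0 [d [d_gt [R [stR _]]]].
suff: verdict (st (rST + 4 * D + 1) p) by case: verdict => [v|] //; exists v.
rewrite addn1; apply/window_decides/window_certified_complete => //.
by apply: vstable_sub stR _ _; lia.
Qed.

End Consensus.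

Theorem theorem1 :
  forall (D : nat), 0 < D ->
  forall (n : nat), 2 <= n ->
  forall (disp : Order.disp_t) (V : orderType disp),
  exists A : Algorithm n V,
    forall (G : graph_seq n) (inp : 'I_n -> V),
      simple_graphs G -> Assumption1 G D ->
      solves_consensus A G inp /\
      (forall rST, good_start G D rST ->
         (forall r, good_start G D r -> rST <= r) ->
         forall p, exists v, decided A G inp p (rST + 4 * D + 1) v).
Proof.
move=> D D_gt0 n _ disp V; exists (consensus_alg D n V).
move=> G inp _ [root_unique stable_bounded [r0 good_r0]].
have decides_by := verdict_by_good_start inp D_gt0 stable_bounded.
split; last by move=> rST good_rST _ p; apply: decides_by.
split.
- by move=> p r r' v; apply: verdict_persists.
- move=> p q r r' v w.
  move=> /(verdict_uniform D_gt0 root_unique stable_bounded) [T unif_v].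
  move=> /(verdict_uniform D_gt0 root_unique stable_bounded) [T' unif_w].
  rewrite -(uniform_value_persists (leq_maxl T T') unif_v p).
  by rewrite (uniform_value_persists (leq_maxr T T') unif_w p).
- by move=> p r v /verdict_origin[r0' [_ ->]]; apply: value_is_input.
- by move=> p; exists (r0 + 4 * D + 1); apply: decides_by.
Qed.
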